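(* Let $\mathcal A=(Q,\Sigma,\delta,\rho)$ be a connected bireversible Mealy automaton whose labeled orbit tree $\mathfrak t(\mathcal A)$ has no active self-liftable branch, and let $\mathfrak j$ be a jungle tree of $\mathfrak t(\mathcal A)$. Then there is a constant $C$ depending only on $\mathfrak j$ such that for every cyclic $\mathfrak j$-word $\mathbf u$, the map $\rho_{\mathbf u}$ has finite order at most $C$.
   Context: Mealy automata. A Mealy automaton is $\mathcal A=(Q,\Sigma,\delta,\rho)$ with $Q,\Sigma$ finite non-empty sets, $\delta=(\delta_i\colon Q\to Q)_{i\in\Sigma}$, $\rho=(\rho_x\colon\Sigma\to\Sigma)_{x\in Q}$; it has a transition $x\xrightarrow{i\mid\rho_x(i)}\delta_i(x)$ for each $x,i$. It is invertible if each $\rho_x$ is a permutation of $\Sigma$, reversible if each $\delta_i$ is a permutation of $Q$, bireversible if it is invertible, reversible, and for each $j\in\Sigma$ the map $x\mapsto\delta_{\rho_x^{-1}(j)}(x)$ is a permutation of $Q$. It is connected if the directed graph on $Q$ with edges $x\to\delta_i(x)$ is connected. Extensions: $\rho_x(i\mathbf s)=\rho_x(i)\rho_{\delta_i(x)}(\mathbf s)$ on $\Sigma^*$; for $\mathbf u=x_1\cdots x_m\in Q^m$, $\rho_{\mathbf u}=\rho_{x_m}\circ\cdots\circ\rho_{x_1}$; dually $\delta_i(x\mathbf u)=\delta_i(x)\delta_{\rho_x(i)}(\mathbf u)$ on $Q^*$ and $\delta_{i_1\cdots i_m}=\delta_{i_m}\circ\cdots\circ\delta_{i_1}$. The $n$-th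 power $\mathcal A^n$ has stateset $Q^n$ and transitions $\mathbf u\xrightarrow{i\mid\rho_{\mathbf u}(i)}\delta_i(\mathbf u)$; for reversible $\mathcal A$ its connected components are the orbits of $Q^n$ under the maps $\delta_{\mathbf s}$, $\mathbf s\in\Sigma^*$. Orbit tree. For reversible $\mathcal A$, $\mathfrak t(\mathcal A)$ is the rooted tree whose vertices at level $n\ge0$ are the connected components of $\mathcal A^n$ (level $0$: the single component of the empty word), with an edge from the component of $\mathbf u\in Q^n$ to the component of $\mathbf ux$ for all $\mathbf u\in Q^n$, $x\in Q$; the edge $C\to D$ is labeled by the integer $\#D/\#C$. Paths go downward; $\top$ and $\bot$ denote the first and last vertex of a path; the level of an edge or path is the level of its top vertex. A word in $Q^*\cup Q^\omega$ represents the initial path (starting at the root) through the components of its prefixes. An edge $e$ is liftable to an edge $f$ if every word of $\bot(e)$ has a suffix in $\bot(f)$; a path $(e_i)_{i\in I}$ is liftable to a path $(f_i)_{i\in I}$ of the same length if each $e_i$ is liftable to $f_i$. An edge $f$ is a legitimate child of an edge $e$ if $\top(f)=\bot(e)$ and $f$ is liftable to $e$. A path or subtree $\mathfrak s$ is $k$-self-liftable ($k>0$) if for every $i\ge0$ every path in $\mathfrak s$ starting at level $i+k$ is liftable to a path in $\mathfrak s$ starting at level $i$; self-liftable if $k$-self-liftable for some $k>0$. A branch is an infinite initial path; it is active if its sequence of labels is not eventually constantly $1$. Jungle trees. Let $\mathbf e$ be a finite 1-self-liftable initial path of length $n$ whose last edge has at least two legitimate children, all of label $1$. The jungle tree $\mathfrak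 j(\mathbf e)$ is the subtree consisting of $\mathbf e$ (its trunk) together with all edges that are descendants of $\bot(\mathbf e)$ and liftable to the last edge of $\mathbf e$. A jungle tree is a tree of this form. A $\mathfrak j$-word is a word of $Q^*\cup Q^\omega$ representing an initial path of $\mathfrak j$; a cyclic $\mathfrak j$-word is a word $\mathbf u\in Q^*$ all of whose powers $\mathbf u^m$ ($m\ge1$) are $\mathfrak j$-words. *)

From mathcomp Require Import all_boot.
From mathcomp Require Import boolp.
Set Implicit Arguments. Unset Strict Implicit. Unset Printing Implicit Defensive.

Section Mealy.
Variables (Q S : finType) (delta : S -> Q -> Q) (rho : Q -> S -> S).

(* Mealy automaton A = (Q, S, delta, rho): transition x --i|rho x i--> delta i x *)

Definition invertible := forall x, bijective (rho x).
Definition reversible := forall i, bijective (delta i).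
Definition bireversible :=
  [/\ invertible, reversible &
      forall rinv : Q -> S -> S, (forall x, cancel (rho x) (rinv x)) ->
      forall j, bijective (fun x => delta (rinv x j) x)].

Definition connected :=
  forall x y, connect (fun a b => [exists i, (delta i a == b) || (delta i b == a)]) x y.

Fixpoint rhoW (x : Q) (s : seq S) : seq S :=
  if s is i :: s' then rho x i :: rhoW (delta i x) s' else [::].
(* rho_u = rho_{x_m} o ... o rho_{x_1} for u = x_1 ... x_m *)
Definition rhoU (u : seq Q) (s : seq S) : seq S := foldl (fun s x => rhoW x s) s u.

Fixpoint deltaW (i : S) (u : seq Q) : seq Q :=
  if u is x :: u' then delta i x :: deltaW (rho x i) u' else [::].
(* delta_{i_1...i_m} = delta_{i_m} o ... o delta_{i_1} *)
Definition deltaS (s : seq S) (u : seq Q) : seq Q := foldl (fun u i => deltaW i u) u s.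

(* v lies in the connected component of u in A^(size u)
   (for reversible A: the orbit of u under the maps delta_s) *)
Definition reach (u v : seq Q) : Prop := exists s : seq S, deltaS s u = v.

Definition comp_card (u : seq Q) : nat :=
  #|[set v : (size u).-tuple Q | `[< reach u v >] ]|.

(* Edges of the orbit tree are identified by their bottom vertex: the edge
   with bottom the component of a nonempty word w goes from the component of
   the prefix of w of length (size w - 1) to the component of w. *)
Definition label (w : seq Q) : nat := comp_card w %/ comp_card (take (size w).-1 w).

Definition edge_liftable (b c : seq Q) : Prop :=
  forall v, reach b v -> exists k, reach c (drop k v).

(* A set of edges is a predicate on words (bottom representatives).
   The path of length m starting at level i ending at the component of w
   (size w = i + m) lies in E. *)
Definition path_in (E : seq Q -> Prop) (w : seq Q) (i m : nat) : Prop :=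
  size w = i + m /\ forall j, i <= j < i + m -> E (take j.+1 w).

Definition path_lift (w : seq Q) (i : nat) (w' : seq Q) (i' m : nat) : Prop :=
  forall t, t < m -> edge_liftable (take (i + t).+1 w) (take (i' + t).+1 w').

Definition k_self_liftable (E : seq Q -> Prop) (k : nat) : Prop :=
  forall i m w, path_in E w (i + k) m ->
    exists w', path_in E w' i m /\ path_lift w (i + k) w' i m.

Definition self_liftable (E : seq Q -> Prop) : Prop :=
  exists k, 0 < k /\ k_self_liftable E k.

(* branch represented by an infinite word X *)
Definition branch (X : nat -> Q) : seq Q -> Prop :=
  fun w => 0 < size w /\ reach (mkseq X (size w)) w.

Definition active (X : nat -> Q) : Prop :=
  ~ (exists N, forall n, N <= n -> label (mkseq X n.+1) = 1).

Definition no_active_self_liftable_branch : Prop :=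
  forall X : nat -> Q, ~ (active X /\ self_liftable (branch X)).

(* the finite initial path represented by a (the trunk) *)
Definition trunk (a : seq Q) : seq Q -> Prop :=
  fun w => 0 < size w <= size a /\ reach (take (size w) a) w.

Definition legit_child (a w : seq Q) : Prop :=
  size w = (size a).+1 /\ reach a (take (size a) w) /\ edge_liftable w a.

Definition jungle_trunk (a : seq Q) : Prop :=
  [/\ 0 < size a,
      k_self_liftable (trunk a) 1,
      (exists w1 w2, [/\ legit_child a w1, legit_child a w2 & ~ reach w1 w2]) &
      (forall w, legit_child a w -> label w = 1)].

(* the jungle tree j(e): trunk plus descendant edges of bot(e) liftable to
   the last edge of e *)
Definition jungle (a : seq Q) : seq Q -> Prop :=
  fun w => trunk a w \/
    [/\ size a < size w, reach a (take (size a) w) & edge_liftable w a].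

Definition jword (a u : seq Q) : Prop :=
  forall t, 0 < t <= size u -> jungle a (take t u).

Definition cyclic_jword (a u : seq Q) : Prop :=
  forall m, 0 < m -> jword a (flatten (nseq m u)).

End Mealy.

From mathcomp Require Import all_boot.
From mathcomp Require Import boolp.
From mathcomp Require Import zify.
Set Implicit Arguments. Unset Strict Implicit. Unset Printing Implicit Defensive.

(* Let n = size a and P = (#|S|^(|Q|^n))!. For a cyclic j-word u, the word
   w = u^(nP) is a j-word and rho_w = rho_u^(nP). Since rho_u permutes the
   words of each length, rho_w fixes every word of length at most |Q|^n.
   A shortest word z moved by rho_w visits pairwise distinct states
   delta_{z_1..z_j}(w); as every window of length n+1 of a j-word is a
   legitimate child of the trunk, of label 1, the action of delta on the
   prefixes of w is determined by the first n letters of the image, so these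
   states already differ in their prefixes of length n. Hence
   size z <= |Q|^n, a contradiction: rho_u^(nP) is the identity.
   Neither connectedness nor the absence of active self-liftable branches is
   needed for this. *)

Lemma iter_fact_id (T : finType) (f : T -> T) N x :
  injective f -> #|T| <= N -> iter N`! f x = x.
Proof.
move=> f_inj leTN.
have [k ->] : exists k, N`! = k * order f x.
  by apply/dvdnP/dvdn_fact; rewrite order_gt0 (leq_trans (max_card _)).
by rewrite iterM iter_fix // iter_order.
Qed.

Section WordActions.
Variables (Q S : finType) (delta : S -> Q -> Q) (rho : Q -> S -> S).

Local Notation rhoW := (rhoW delta rho).
Local Notation rhoU := (rhoU delta rho).
Local Notation deltaW := (deltaW delta rho).
Local Notation deltaS := (deltaS delta rho).
Local Notation reach := (reach delta rho).

Definition deltaS1 (x : Q) (s : seq S) : Q := foldl (fun x i => delta i x) x s.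

Lemma size_rhoW x s : size (rhoW x s) = size s.
Proof. by elim: s x => [|i s IH] x //=; rewrite IH. Qed.

Lemma rhoU_consl x u s : rhoU (x :: u) s = rhoU u (rhoW x s).
Proof. by []. Qed.

Lemma deltaS_consl i s u : deltaS (i :: s) u = deltaS s (deltaW i u).
Proof. by []. Qed.

Lemma size_rhoU u s : size (rhoU u s) = size s.
Proof. by elim: u s => [|x u IH] s //; rewrite rhoU_consl IH size_rhoW. Qed.

Lemma size_deltaW i u : size (deltaW i u) = size u.
Proof. by elim: u i => [|x u IH] i //=; rewrite IH. Qed.

Lemma size_deltaS s u : size (deltaS s u) = size u.
Proof. by elim: s u => [|i s IH] u //; rewrite deltaS_consl IH size_deltaW. Qed.

Lemma deltaS_nil s : deltaS s [::] = [::].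
Proof. by apply/size0nil; rewrite size_deltaS. Qed.

Lemma deltaS_catl s t u : deltaS (s ++ t) u = deltaS t (deltaS s u).
Proof. by rewrite /deltaS foldl_cat. Qed.

Lemma rhoU_catl u v s : rhoU (u ++ v) s = rhoU v (rhoU u s).
Proof. by rewrite /rhoU foldl_cat. Qed.

Lemma rhoW_cat x s t : rhoW x (s ++ t) = rhoW x s ++ rhoW (deltaS1 x s) t.
Proof. by elim: s x => [|i s IH] x //=; rewrite IH. Qed.

Lemma deltaS_consr s x u : deltaS s (x :: u) = deltaS1 x s :: deltaS (rhoW x s) u.
Proof. by elim: s x u => [|i s IH] x u //=. Qed.

Lemma rhoU_catr u s t : rhoU u (s ++ t) = rhoU u s ++ rhoU (deltaS s u) t.
Proof.
elim: u s t => [|x u IH] s t; first by rewrite deltaS_nil.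
by rewrite !rhoU_consl rhoW_cat IH deltaS_consr.
Qed.

Lemma deltaS_catr s p q : deltaS s (p ++ q) = deltaS s p ++ deltaS (rhoU p s) q.
Proof.
elim: p s => [|x p IH] s /=; first by rewrite deltaS_nil.
by rewrite !deltaS_consr IH.
Qed.

Lemma take_deltaS m s u : take m (deltaS s u) = deltaS s (take m u).
Proof.
have [le_mu | lt_um] := leqP m (size u); last first.
  by rewrite !take_oversize ?size_deltaS // ltnW.
rewrite -{1}(cat_take_drop m u) deltaS_catr take_size_cat //.
by rewrite size_deltaS size_takel.
Qed.

Lemma drop_deltaS m s u : exists t, drop m (deltaS s u) = deltaS t (drop m u).
Proof.
have [le_mu | lt_um] := leqP m (size u); last first.
  by exists [::]; rewrite !drop_oversize ?size_deltaS ?deltaS_nil // ltnW.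
exists (rhoU (take m u) s).
rewrite -{1}(cat_take_drop m u) deltaS_catr drop_size_cat //.
by rewrite size_deltaS size_takel.
Qed.

Lemma iter_rhoU k u s : iter k (rhoU u) s = rhoU (flatten (nseq k u)) s.
Proof. by elim: k s => [|k IH] s //; rewrite iterSr IH /= rhoU_catl. Qed.

Lemma reach_refl u : reach u u.
Proof. by exists [::]. Qed.

Lemma reach_trans u v w : reach u v -> reach v w -> reach u w.
Proof. by move=> [s <-] [t <-]; exists (s ++ t); rewrite deltaS_catl. Qed.

Lemma reach_size u v : reach u v -> size v = size u.
Proof. by move=> [s <-]; rewrite size_deltaS. Qed.

(* If z is a shortest word moved by rho_w, then z = z1 z2 with z1 fixed gives
   rho_w(z) = z1 rho_{w'}(z2) with w' = delta_{z1}(w); two equal such states w'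
   would let us cut out the factor between them and get a shorter moved word. *)
Lemma deltaS_take_inj_of_moved w z :
  (forall t, size t < size z -> rhoU w t = t) -> rhoU w z != z ->
  injective (fun j : 'I_(size z) => deltaS (take j z) w).
Proof.
move=> fix_short moved.
have rhoU_take (j : 'I_(size z)) t :
    rhoU w (take j z ++ t) = take j z ++ rhoU (deltaS (take j z) w) t.
  by rewrite rhoU_catr fix_short // size_takel // ltnW.
have moved_drop (j : 'I_(size z)) :
    rhoU (deltaS (take j z) w) (drop j z) != drop j z.
  apply: contra moved => /eqP fixed.
  by rewrite -{1}(cat_take_drop j z) rhoU_take fixed cat_take_drop.
suff neq_lt (i j : 'I_(size z)) : i < j -> deltaS (take i z) w != deltaS (take j z) w.
  move=> i j /eqP; case: (ltngtP i j) => [lt_ij | lt_ji | /val_inj //].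
  - by rewrite (negPf (neq_lt _ _ lt_ij)).
  - by rewrite eq_sym (negPf (neq_lt _ _ lt_ji)).
move=> lt_ij; apply/eqP=> same_state; move: (moved_drop j); rewrite -same_state.
have /fix_short : size (take i z ++ drop j z) < size z.
  rewrite size_cat size_drop size_takel; have := ltn_ord j; lia.
by rewrite rhoU_take => /eqP; rewrite eqseq_cat // => /andP[_ ->].
Qed.

End WordActions.

Section Invertible.
Variables (Q S : finType) (delta : S -> Q -> Q) (rho : Q -> S -> S).
Hypothesis rho_inj : forall x, injective (rho x).

Local Notation rhoW := (rhoW delta rho).
Local Notation rhoU := (rhoU delta rho).

Lemma rhoW_inj x : injective (rhoW x).
Proof.
move=> s t; elim: s x t => [|i s IH] x [|j t] //= [/rho_inj <- /IH -> //].
Qed.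

Lemma rhoU_inj u : injective (rhoU u).
Proof. by elim: u => [|x u IH] s t // /IH /rhoW_inj. Qed.

Definition rhoU_tuple u m (t : m.-tuple S) : m.-tuple S :=
  Tuple (introT eqP (etrans (size_rhoU delta rho u t) (size_tuple t))).

Lemma val_iter_rhoU_tuple u m k (t : m.-tuple S) :
  val (iter k (@rhoU_tuple u m) t) = iter k (rhoU u) t.
Proof. by elim: k => //= k ->. Qed.

Lemma iter_rhoU_fact_short u m s : 0 < #|S| -> size s <= m ->
  iter #|{: m.-tuple S}|`! (rhoU u) s = s.
Proof.
move=> S_gt0 le_sm.
have tuple_inj : injective (@rhoU_tuple u (size s)).
  by move=> t1 t2 /(congr1 val) /rhoU_inj /val_inj.
have card_le : #|{: (size s).-tuple S}| <= #|{: m.-tuple S}|.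
  by rewrite !card_tuple leq_pexp2l.
have /(congr1 val) := iter_fact_id (in_tuple s) tuple_inj card_le.
by rewrite val_iter_rhoU_tuple.
Qed.

End Invertible.

Section Reversible.
Variables (Q S : finType) (delta : S -> Q -> Q) (rho : Q -> S -> S).
Hypothesis delta_inj : forall i, injective (delta i).

Local Notation deltaW := (deltaW delta rho).
Local Notation deltaS := (deltaS delta rho).
Local Notation reach := (reach delta rho).
Local Notation comp_card := (comp_card delta rho).
Local Notation label := (label delta rho).

Lemma deltaW_inj i : injective (deltaW i).
Proof.
move=> u v; elim: u i v => [|x u IH] i [|y v] //= [/delta_inj <- /IH -> //].
Qed.

Lemma deltaS_inj s : injective (deltaS s).
Proof. by elim: s => [|i s IH] u v // /IH /deltaW_inj. Qed.

Definition deltaS_tuple s m (t : m.-tuple Q) : m.-tuple Q :=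
  Tuple (introT eqP (etrans (size_deltaS delta rho s t) (size_tuple t))).

Lemma iter_deltaS_tuple s m k (t : m.-tuple Q) :
  val (iter k (@deltaS_tuple s m) t) = deltaS (flatten (nseq k s)) t.
Proof. by elim: k t => [|k IH] t //; rewrite iterSr IH /= deltaS_catl. Qed.

(* delta_s permutes the finite set of words of a given length, so its inverse
   is one of its powers. *)
Lemma reach_sym u v : reach u v -> reach v u.
Proof.
move=> [s <-]; set f := @deltaS_tuple s (size u).
have f_inj : injective f by move=> t1 t2 /(congr1 val) /deltaS_inj /val_inj.
have back : fconnect f (f (in_tuple u)) (in_tuple u) by rewrite fconnect_sym // fconnect1.
exists (flatten (nseq (findex f (f (in_tuple u)) (in_tuple u)) s)).
by have /(congr1 val) := iter_findex back; rewrite iter_deltaS_tuple.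
Qed.

(* Every word p in the component of take m c lifts to two distinct words of the
   component of c: p = delta_r (take m (delta_s c)), lifted to delta_r (delta_s c)
   and delta_r (delta_t c). *)
Lemma comp_card_take_double c m s t :
  take m (deltaS s c) = take m (deltaS t c) -> deltaS s c != deltaS t c ->
  2 * comp_card (take m c) <= comp_card c.
Proof.
move=> eq_take neq_full.
set q := take m c; set q' := take m (deltaS s c).
pose CQ := [set p : (size q).-tuple Q | `[< reach q p >] ].
pose CC := [set v : (size c).-tuple Q | `[< reach c v >] ].
pose r p := if pselect (reach q' p) is left H then sval (cid H) else [::].
have rK p : p \in CQ -> deltaS (r p) q' = p.
  rewrite inE => /asboolP reach_qp; rewrite /r; case: pselect => [H | []].
    exact: svalP (cid H).
  by apply: reach_trans reach_qp; apply: reach_sym; exists s; rewrite /q' take_deltaS.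
pose g (pb : (size q).-tuple Q * bool) :=
  deltaS_tuple (r pb.1) (deltaS_tuple (if pb.2 then t else s) (in_tuple c)).
have take_g p b : take m (val (g (p, b))) = deltaS (r p) q'.
  by rewrite /= take_deltaS /q'; case: b; rewrite //= eq_take.
have g_inj : {in setX CQ [set: bool] &, injective g}.
  move=> [p1 b1] [p2 b2] /setXP[CQp1 _] /setXP[CQp2 _] eq_g.
  have eq_p : p1 = p2.
    apply: val_inj; have := congr1 (fun v => take m (val v)) eq_g.
    by rewrite !take_g (rK _ CQp1) (rK _ CQp2).
  move: eq_g; rewrite eq_p => /(congr1 val) /deltaS_inj.
  by case: b1; case: b2 => //= eq_st; rewrite eq_st eqxx in neq_full.
have g_sub : g @: setX CQ [set: bool] \subset CC.
  apply/subsetP => _ /imsetP[[p b] _ ->]; rewrite inE; apply/asboolP.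
  apply: (reach_trans (v := deltaS (if b then t else s) c)).
    by exists (if b then t else s).
  by exists (r p).
rewrite /comp_card -/CQ -/CC mulnC -card_bool -cardsT -cardsX.
by rewrite -(card_in_imset g_inj) subset_leq_card.
Qed.

Lemma label1_deltaS_eq c s t : label c = 1 ->
  take (size c).-1 (deltaS s c) = take (size c).-1 (deltaS t c) ->
  deltaS s c = deltaS t c.
Proof.
move=> label1 eq_take; apply/eqP; apply: contraT => neq_full.
set q := take (size c).-1 c.
have comp_gt0 : 0 < comp_card q.
  by apply/card_gt0P; exists (in_tuple q); rewrite inE; apply/asboolP/reach_refl.
have /(leq_div2r (comp_card q)) := comp_card_take_double eq_take neq_full.
by rewrite mulnK // -/(label c) label1.
Qed.

End Reversible.
Section Jungle.
Variables (Q S : finType) (delta : S -> Q -> Q) (rho : Q -> S -> S).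
Hypothesis delta_inj : forall i, injective (delta i).
Variable a : seq Q.
Hypothesis a_gt0 : 0 < size a.
Hypothesis label_legit_child : forall c, legit_child delta rho a c -> label delta rho c = 1.

Local Notation rhoU := (rhoU delta rho).
Local Notation deltaS := (deltaS delta rho).
Local Notation reach := (reach delta rho).
Local Notation jword := (jword delta rho).

Lemma jword_window_reach w L : jword a w -> size a <= L <= size w ->
  reach a (drop (L - size a) (take L w)).
Proof.
move=> jw /andP[le_aL le_Lw].
have size_take : size (take L w) = L by rewrite size_takel.
have : jungle delta rho a (take L w) by apply: jw; rewrite le_Lw (leq_trans a_gt0 le_aL).
case=> [[/andP[_ le_La] reach_trunk] | [_ _ lift]].
  rewrite size_take in le_La reach_trunk.
  have L_eq : L = size a by apply/eqP; rewrite eqn_leq le_La.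
  by rewrite L_eq subnn drop0 take_oversize -L_eq // in reach_trunk *.
have [k reach_k] := lift _ (reach_refl _ _ _).
have := reach_size reach_k; rewrite size_drop size_take => size_eq.
by rewrite (_ : L - size a = k) //; lia.
Qed.

Lemma jword_window_legit w L : jword a w -> size a <= L < size w ->
  legit_child delta rho a (drop (L - size a) (take L.+1 w)).
Proof.
move=> jw /andP[le_aL lt_Lw]; split; last split.
- by rewrite size_drop size_takel //; lia.
- rewrite take_drop subnKC // take_takel //.
  by apply: jword_window_reach; rewrite // le_aL ltnW.
- move=> v [s <-]; exists 1.
  have [t ->] := drop_deltaS delta rho 1 s (drop (L - size a) (take L.+1 w)).
  apply: (reach_trans (v := drop 1 (drop (L - size a) (take L.+1 w)))); last by exists t.
  rewrite drop_drop (_ : 1 + (L - size a) = L.+1 - size a); last by lia.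
  by apply: jword_window_reach; rewrite // lt_Lw; lia.
Qed.

(* Induction along the prefixes of w: each new letter adds a legitimate child
   as the last window, and on a child of label 1 delta_s is determined by its
   action on the first size a letters. *)
Lemma jword_deltaS_eq w d s t : jword a w -> size a + d <= size w ->
  take (size a) (deltaS s (take (size a + d) w)) =
    take (size a) (deltaS t (take (size a + d) w)) ->
  deltaS s (take (size a + d) w) = deltaS t (take (size a + d) w).
Proof.
move=> jw; set n := size a.
elim: d s t => [|d IH] s t le_w; first by rewrite addn0 !take_deltaS take_takel.
rewrite addnS; set L := n + d => eq_take.
set p := take d w; set c := drop d (take L.+1 w).
have size_c : size c = n.+1 by rewrite size_drop size_takel /L; lia.
have take_w1 : take L.+1 w = p ++ c.
  by rewrite -{1}(cat_take_drop d (take L.+1 w)) take_takel // /L; lia.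
have take_w : take L w = p ++ take n c.
  rewrite /c take_drop take_takel -/L // -{1}(cat_take_drop d (take L w)).
  by rewrite take_takel // /L leq_addl.
have eq_L : deltaS s (take L w) = deltaS t (take L w).
  apply: IH; first by rewrite /L; lia.
  by move: eq_take; rewrite !take_deltaS !take_takel ?leq_addr //; lia.
move: eq_L eq_take; rewrite take_w take_w1 !deltaS_catr => /eqP.
rewrite eqseq_cat ?size_deltaS // => /andP[/eqP -> /eqP eq_c] _; congr (_ ++ _).
apply: label1_deltaS_eq => //.
  apply: label_legit_child; rewrite /c (_ : d = L - n); last by rewrite /L; lia.
  by apply: jword_window_legit; rewrite // /L; lia.
by rewrite size_c !take_deltaS eq_c.
Qed.

Lemma jword_rhoU_id w : jword a w -> size a <= size w ->
  (forall s, size s <= #|Q| ^ size a -> rhoU w s = s) -> forall s, rhoU w s = s.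
Proof.
move=> jw le_aw fix_short z.
have [m] := ubnP (size z); elim: m z => // m IH z lt_zm.
apply/eqP; apply: contraT => moved.
have v_inj := deltaS_take_inj_of_moved (fun t lt_tz => IH t (leq_trans lt_tz lt_zm)) moved.
have size_take_v (j : 'I_(size z)) : size (take (size a) (deltaS (take j z) w)) == size a.
  by rewrite size_takel // size_deltaS.
pose f j : (size a).-tuple Q := Tuple (size_take_v j).
have f_inj : injective f.
  move=> i j /(congr1 val) /= eq_take; apply: v_inj => /=.
  have w_eq : take (size a + (size w - size a)) w = w by rewrite subnKC // take_size.
  have le_w : size a + (size w - size a) <= size w by rewrite subnKC.
  by have := jword_deltaS_eq (s := take i z) (t := take j z) jw le_w; rewrite w_eq; apply.
have := leq_card f f_inj; rewrite card_ord card_tuple => /fix_short.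
by move=> fixed; rewrite fixed eqxx in moved.
Qed.

End Jungle.

Theorem proposition5p3 (Q S : finType) (delta : S -> Q -> Q) (rho : Q -> S -> S) :
  0 < #|Q| -> 0 < #|S| ->
  bireversible delta rho -> connected delta ->
  no_active_self_liftable_branch delta rho ->
  forall a : seq Q, jungle_trunk delta rho a ->
  exists C : nat, forall u : seq Q, cyclic_jword delta rho a u ->
    exists k, 0 < k <= C /\ forall s : seq S, iter k (rhoU delta rho u) s = s.
Proof.
move=> _ S_gt0 [rho_bij delta_bij _] _ _ a [a_gt0 _ _ label_legit].
have delta_inj i : injective (delta i) := bij_inj (delta_bij i).
have rho_inj x : injective (rho x) := bij_inj (rho_bij x).
set P := #|{: (#|Q| ^ size a).-tuple S}|`!.
set C := size a * P.
have C_gt0 : 0 < C by rewrite muln_gt0 a_gt0 fact_gt0.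
exists C => u cyc_u; exists C; split=> [|s]; first by rewrite C_gt0 leqnn.
case: u cyc_u => [|x u] cyc_u; first by rewrite iter_fix.
rewrite iter_rhoU; apply: (jword_rhoU_id delta_inj a_gt0 label_legit (cyc_u C C_gt0)).
  rewrite size_flatten /shape map_nseq sumn_nseq /=.
  by rewrite (leq_trans _ (leq_pmull _ _)) // leq_pmulr // fact_gt0.
by move=> t le_t; rewrite -iter_rhoU iterM iter_fix // iter_rhoU_fact_short.
Qed.
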